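(* Let $A$ be a finite alphabet, $n\ge1$, and $L\subseteq(A^\ast)^n$ a regular $n$-variable language. There is a positive integer $p$ such that for every $(w_1,\ldots,w_n)\in L$ with $N:=\max_i|w_i|\ge p$ the following holds. Let $w_i^\$=w_i\$^{N-|w_i|}$ (so each $w_i^\$$ has length $N$). Then there are integers $k\ge1$ and $l\ge 0$ with $k+l\le N$ such that, writing each $w_i^\$=u_im_iv_i$ where $m_i$ consists of the $k$-th through $(k+l)$-th letters of $w_i^\$$, for all $r\ge1$ the tuple $(u_1m_1^rv_1,\ldots,u_nm_n^rv_n)$, read as a word over the padded alphabet, lies in $L^\$$ (i.e. deleting the $\$$ symbols yields an element of $L$). Moreover, each $m_i$ consists either entirely of letters of $A$ or entirely of $\$$ symbols.
   Context: $A^\ast$ is the set of finite words over $A$, $\$$ a new padding symbol, $A^\$=(A\sqcup\{\$\})^n\setminus\{(\$,\ldots,\$)\}$ the padded alphabet. For $(w_1,\ldots,w_n)\in(A^\ast)^n$ with $N=\max|w_i|$, its padded string is the word $\overline\sigma_1\cdots\overline\sigma_N$ over $A^\$$ where $\overline\sigma_j$ is the $n$-tuple of $j$-th letters of the $w_i$, using $\$$ when $j>|w_i|$. $L^\$$ is the set of padded strings of elements of $L$. $L$ is regular ($n$-tape regular) if $L^\$$ is accepted by a deterministic finite state automaton over $A^\$$. *)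

From mathcomp Require Import all_boot.
Set Implicit Arguments. Unset Strict Implicit. Unset Printing Implicit Defensive.

(* Letters of the padded alphabet for n tapes: n-tuples over A ⊔ {$},
   where [None] stands for the padding symbol $. *)
Definition padlet (A : finType) (n : nat) := {ffun 'I_n -> option A}.

Definition is_padlet (A : finType) (n : nat) (c : padlet A n) : bool :=
  [exists i, c i != None].

Record dfa (S : finType) := DFA {
  dstate : finType;
  dstart : dstate;
  dfinal : pred dstate;
  dtrans : dstate -> S -> dstate }.

Definition accepts (S : finType) (D : dfa S) (s : seq S) : bool :=
  @dfinal S D (foldl (@dtrans S D) (@dstart S D) s).

Definition cols (A : finType) (n : nat) (x : 'I_n -> seq (option A))
  : seq (padlet A n) :=
  mkseq (fun j => [ffun i => nth None (x i) j]) (\max_(i < n) size (x i)).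

Definition maxlen (A : finType) (n : nat) (w : 'I_n -> seq A) : nat :=
  \max_(i < n) size (w i).

Definition padw (A : finType) (n : nat) (w : 'I_n -> seq A) (i : 'I_n)
  : seq (option A) :=
  map Some (w i) ++ nseq (maxlen w - size (w i)) None.

Definition padded (A : finType) (n : nat) (w : 'I_n -> seq A) : seq (padlet A n) :=
  cols (padw w).

Definition in_Lpad (A : finType) (n : nat) (L : ('I_n -> seq A) -> Prop)
  (s : seq (padlet A n)) : Prop :=
  exists w, L w /\ padded w = s.

(* L is regular: L^$ is the language (over A^$) of a DFA over A^$.  The DFA
   is given over all of (A ⊔ {$})^n, and only its behaviour on words over
   A^$ matters. *)
Definition regular (A : finType) (n : nat) (L : ('I_n -> seq A) -> Prop) : Prop :=
  exists D : dfa (padlet A n),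
    forall s : seq (padlet A n), all (@is_padlet A n) s ->
      (accepts D s <-> in_Lpad L s).

(* Decomposition of a word at 1-indexed positions k .. k+l. *)
Definition pre (T : Type) (k : nat) (s : seq T) := take k.-1 s.
Definition mid (T : Type) (k l : nat) (s : seq T) := take l.+1 (drop k.-1 s).
Definition post (T : Type) (k l : nat) (s : seq T) := drop (k + l) s.
Definition pump (T : Type) (k l r : nat) (s : seq T) :=
  pre k s ++ flatten (nseq r (mid k l s)) ++ post k l s.

From mathcomp Require Import all_boot zify.
Set Implicit Arguments. Unset Strict Implicit. Unset Printing Implicit Defensive.

(* Let Q be the number of states of a DFA for L^$ and p := (n+1)Q.  The n
   lengths |w_i| fall into at most n of the n+1 disjoint windows
   (jQ, jQ+Q) of positions, so some window [c, c+Q] of the padded string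
   contains no end of a w_i in its interior; within it every column slice
   is, componentwise, either all letters or all padding.  Among the Q+1
   prefixes ending in that window two reach the same state, and the slice
   between them can be repeated without changing acceptance.  Pumping the
   padded string columnwise is the same as pumping each w_i^$ because all
   w_i^$ have the same length. *)

Section Columns.
Variables (A : finType) (n : nat).
Hypothesis n_gt0 : 0 < n.
Implicit Types (x y : 'I_n -> seq (option A)) (m : nat).

Lemma cols_uniform x m : (forall i, size (x i) = m) ->
  cols x = mkseq (fun j => [ffun i => nth None (x i) j]) m.
Proof.
move=> sx; rewrite /cols; congr mkseq; apply/eqP; rewrite eqn_leq.
apply/andP; split; first by apply/bigmax_leqP => i _; rewrite sx.
by rewrite -(sx (Ordinal n_gt0)) (leq_bigmax (F := fun i => size (x i))).
Qed.

Lemma cols_take x m t : (forall i, size (x i) = m) ->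
  cols (fun i => take t (x i)) = take t (cols x).
Proof.
move=> sx; rewrite (cols_uniform sx) (cols_uniform (m := minn t m)); last first.
  by move=> i; rewrite size_take_min sx.
rewrite /mkseq -map_take take_iota; apply/eq_in_map => j.
rewrite mem_iota add0n ltn_min => /andP[_ /andP[jt _]].
by apply/ffunP => i; rewrite !ffunE nth_take.
Qed.

Lemma cols_drop x m t : (forall i, size (x i) = m) ->
  cols (fun i => drop t (x i)) = drop t (cols x).
Proof.
move=> sx; rewrite (cols_uniform sx) (cols_uniform (m := m - t)); last first.
  by move=> i; rewrite size_drop sx.
rewrite /mkseq -map_drop drop_iota add0n.
have -> : iota t (m - t) = map (addn t) (iota 0 (m - t)) by rewrite -iotaDl addn0.
rewrite -map_comp; apply: eq_map => j.
by apply/ffunP => i; rewrite /= !ffunE nth_drop.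
Qed.

Lemma cols_cat x y m1 m2 :
  (forall i, size (x i) = m1) -> (forall i, size (y i) = m2) ->
  cols (fun i => x i ++ y i) = cols x ++ cols y.
Proof.
move=> sx sy; rewrite (cols_uniform sx) (cols_uniform sy).
rewrite (cols_uniform (m := m1 + m2)) => [|i]; last by rewrite size_cat sx sy.
rewrite /mkseq iotaD map_cat add0n.
have -> : iota m1 m2 = map (addn m1) (iota 0 m2) by rewrite -iotaDl addn0.
rewrite -map_comp; congr (_ ++ _); last first.
  apply: eq_map => j; apply/ffunP => i.
  by rewrite /= !ffunE nth_cat sx ltnNge leq_addr addKn.
apply/eq_in_map => j; rewrite mem_iota add0n => /andP[_ jm1].
by apply/ffunP => i; rewrite !ffunE nth_cat sx jm1.
Qed.

Lemma size_flatten_nseq (T : Type) r (s : seq T) :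
  size (flatten (nseq r s)) = r * size s.
Proof. by elim: r => //= r IHr; rewrite size_cat IHr mulSn. Qed.

Lemma cols_flatten_nseq x m r : (forall i, size (x i) = m) ->
  cols (fun i => flatten (nseq r (x i))) = flatten (nseq r (cols x)).
Proof.
move=> sx; elim: r => [|r IHr]; first by rewrite (cols_uniform (m := 0)).
rewrite /= -IHr (cols_cat (m1 := m) (m2 := r * m)) // => i.
by rewrite size_flatten_nseq sx.
Qed.

Lemma cols_pump x m k l r : (forall i, size (x i) = m) ->
  cols (fun i => pump k l r (x i)) = pump k l r (cols x).
Proof.
move=> sx; have sdrop t i : size (drop t (x i)) = m - t by rewrite size_drop sx.
have stake t i : size (take t (x i)) = minn t m by rewrite size_take_min sx.
have smid i : size (mid k l (x i)) = minn l.+1 (m - k.-1).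
  by rewrite size_take_min sdrop.
rewrite /pump (cols_cat (m2 := r * minn l.+1 (m - k.-1) + (m - (k + l))) (stake _))
  => [|i]; last first.
  by rewrite size_cat size_flatten_nseq smid sdrop.
rewrite (cols_cat (m1 := r * minn l.+1 (m - k.-1)) _ (sdrop _)) => [|i]; last first.
  by rewrite size_flatten_nseq smid.
rewrite (cols_flatten_nseq _ smid) (cols_take _ sx) (cols_drop _ sx).
by rewrite /mid (cols_take _ (sdrop _)) (cols_drop _ sx).
Qed.

End Columns.

Section Pumping.
Variable T : Type.
Implicit Types (s : seq T) (k l r : nat).

Lemma cat_pre_mid k l s : 0 < k -> pre k s ++ mid k l s = take (k + l) s.
Proof. by move=> k_gt0; rewrite -takeD addnS -addSn prednK. Qed.

Lemma pump1 k l s : 0 < k -> pump k l 1 s = s.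
Proof. by move=> k_gt0; rewrite /pump /= cats0 catA cat_pre_mid // cat_take_drop. Qed.

End Pumping.

Lemma all_pump (T : eqType) (P : pred T) k l r (s : seq T) :
  all P s -> all P (pump k l r s).
Proof.
move=> /allP Ps; have Pdrop t : all P (drop t s) by apply/allP => x /mem_drop /Ps.
have Ptake t s' : all P s' -> all P (take t s').
  by move=> /allP Ps'; apply/allP => x /mem_take /Ps'.
have Pmid : all P (mid k l s) by apply/Ptake/Pdrop.
rewrite /pump !all_cat Ptake ?Pdrop ?andbT; last exact/allP.
by elim: r => //= r IHr; rewrite all_cat Pmid.
Qed.

Definition delta (S : finType) (D : dfa S) (q : dstate D) (s : seq S) : dstate D :=
  foldl (@dtrans S D) q s.

Section Automaton.
Variables (S : finType) (D : dfa S).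
Implicit Types (q : dstate D) (s : seq S).

Lemma acceptsE s : accepts D s = @dfinal S D (delta (dstart D) s).
Proof. by []. Qed.

Lemma delta_cat q s s' : delta q (s ++ s') = delta (delta q s) s'.
Proof. exact: foldl_cat. Qed.

Lemma delta_flatten_nseq q s r : delta q s = q -> delta q (flatten (nseq r s)) = q.
Proof. by move=> sq; elim: r => //= r IHr; rewrite delta_cat sq. Qed.

Lemma accepts_pump k l r s : 0 < k ->
  delta (dstart D) (take (k + l) s) = delta (dstart D) (take k.-1 s) ->
  accepts D (pump k l r s) = accepts D s.
Proof.
move=> k_gt0; rewrite -(cat_pre_mid l s k_gt0) delta_cat => loop.
rewrite -{2}(pump1 l s k_gt0) !acceptsE /pump !delta_cat.
by rewrite delta_flatten_nseq // loop.
Qed.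

Lemma exists_repeated_state s c : exists a b,
  [/\ c <= a, a < b, b <= c + #|dstate D|
    & delta (dstart D) (take a s) = delta (dstart D) (take b s)].
Proof.
pose f (t : 'I_#|dstate D|.+1) := delta (dstart D) (take (c + t) s).
have /injectivePn[t1 [t2 t12 ft12]] : ~~ injectiveb f.
  by apply/injectiveP => /leq_card; rewrite card_ord ltnn.
wlog lt12 : t1 t2 t12 ft12 / t1 < t2.
  move=> gen; case: (ltngtP t1 t2) => [|lt21|/val_inj eq12]; first exact: gen.
  - by apply: (gen t2 t1); rewrite 1?eq_sym.
  - by rewrite eq12 eqxx in t12.
exists (c + t1), (c + t2); split => //; rewrite ?leq_addr ?ltn_add2l ?leq_add2l //.
by rewrite -ltnS.
Qed.

End Automaton.

Lemma exists_free_window (n Q : nat) (f : 'I_n -> nat) :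
  exists c, c + Q <= n.+1 * Q /\ forall i, ~~ (c < f i < c + Q).
Proof.
pose free (j : 'I_n.+1) := [forall i, ~~ (j * Q < f i < j * Q + Q)].
case: (pickP free) => [j /forallP free_j | no_free].
  by exists (j * Q); split; [rewrite -mulSnr leq_mul2r ltn_ord orbT | exact: free_j].
have hit (j : 'I_n.+1) : exists i, j * Q < f i < j * Q + Q.
  move/negbT: (no_free j); rewrite negb_forall => /existsP[i].
  by rewrite negbK; exists i.
have [g g_hit] := fin_all_exists hit.
have /injectivePn[j1 [j2 j12 g12]] : ~~ injectiveb g.
  by apply/injectiveP => /leq_card; rewrite !card_ord ltnn.
move: (g_hit j1) (g_hit j2) j12; rewrite g12 => /andP[lo1 hi1] /andP[lo2 hi2].
by case: (ltngtP j1 j2) => [lt12|lt21|/val_inj->]; rewrite ?eqxx //; nia.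
Qed.

Section Padding.
Variables (A : finType) (n : nat) (w : 'I_n -> seq A).

Lemma size_padw i : size (padw w i) = maxlen w.
Proof.
rewrite /padw size_cat size_map size_nseq subnKC //.
exact: (leq_bigmax (F := fun i => size (w i))).
Qed.

Lemma all_padlet_padded : 0 < n -> all (@is_padlet A n) (padded w).
Proof.
move=> n_gt0; rewrite /padded (cols_uniform n_gt0 size_padw).
apply/allP => c /mapP[j]; rewrite mem_iota add0n => /andP[_ j_lt] ->.
have [i j_lt_i] : exists i, j < size (w i).
  apply/existsP; apply: contraLR j_lt; rewrite negb_exists -leqNgt => /forallP wj.
  by apply/bigmax_leqP => i _; rewrite leqNgt wj.
apply/existsP; exists i; rewrite ffunE /padw nth_cat size_map j_lt_i.
have /mapP[a _ ->] : nth None (map Some (w i)) j \in map Some (w i).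
  by rewrite mem_nth ?size_map.
by [].
Qed.

Lemma padw_window a m i : (size (w i) <= a) || (a + m <= size (w i)) ->
  all (fun c => c != None) (take m (drop a (padw w i))) \/
  all (fun c => c == None) (take m (drop a (padw w i))).
Proof.
case: (leqP (size (w i)) a) => [wi_le_a _ | a_lt_wi /= am_le_wi].
  right; rewrite /padw -(subnK wi_le_a) -drop_drop drop_size_cat ?size_map //.
  by apply/allP => c /mem_take /mem_drop; rewrite mem_nseq => /andP[_ /eqP->].
left; rewrite /padw drop_cat size_map a_lt_wi.
rewrite takel_cat ?size_drop ?size_map; last by lia.
by rewrite -map_drop -map_take all_map; apply/allP.
Qed.

End Padding.

Theorem mainTheorem8 (A : finType) (n : nat) (L : ('I_n -> seq A) -> Prop) :
  0 < n -> regular L ->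
  exists p : nat, 0 < p /\
    forall w : 'I_n -> seq A, L w -> p <= maxlen w ->
      exists k l : nat,
        [/\ 1 <= k, k + l <= maxlen w,
            (forall i : 'I_n,
               all (fun c => c != None) (mid k l (padw w i)) \/
               all (fun c => c == None) (mid k l (padw w i)))
          & forall r : nat, 1 <= r ->
              in_Lpad L (cols (fun i => pump k l r (padw w i)))].
Proof.
move=> n_gt0 [D accD]; set Q := #|dstate D|.
exists (n.+1 * Q); split=> [|w Lw long].
  by rewrite muln_gt0; apply/card_gt0P; exists (dstart D).
have [c [cQ free]] := exists_free_window Q (fun i => size (w i)).
have [a [b [ca ab bcQ loop]]] := exists_repeated_state D (padded w) c.
have bN : b <= maxlen w by rewrite (leq_trans bcQ) // (leq_trans cQ).
have kl : a.+1 + (b - a.+1) = b by rewrite subnKC.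
exists a.+1, (b - a.+1); split=> // [|i|r _]; first by rewrite kl.
  rewrite /mid /= subnSK //; apply: padw_window.
  by move: (free i) bcQ; rewrite -/Q subnKC; lia.
have all_padded := all_padlet_padded w n_gt0.
apply/accD; rewrite (cols_pump n_gt0 _ _ _ (size_padw w)); first exact: all_pump.
by rewrite accepts_pump ?kl //; apply/accD => //; exists w.
Qed.
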